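(* The cellular automaton $F$ on the free group $G$ with generators $a,b$ and alphabet $A=\{0,1,\iota,\beta\}$ described in the context has no equicontinuity point.
   Context: $G$ is the free group on $\{a,b\}$ with generating set $E=\{a,a^{-1},b,b^{-1}\}$, word norm $\|g\|$, and Cantor metric $d(x,y)=2^{-k}$, $k=\min\{\|g\|:x_g\neq y_g\}$, on $A^G$, with closed balls $B$. In a configuration $c\in A^G$, a position $g$ is free if $c_g\in\{0,1\}$ and $|\{g'\in gE: c_{g'}\in\{0,1\}\}|\geq 2$. A position $g$ is blocked in $c$ if either ($c_g=\iota$ and $c_{g'}\in\{\iota,\beta\}$ for all $g'\in gE$), or ($c_g=\beta$ and exactly one $g'\in gE$ has $c_{g'}=\iota$ and all other elements of $gE$ are free in $c$). The map $F:A^G\to A^G$ is defined by: $F(c)_g=c_g+\sum_{g'\in gE,\,c_{g'}\in\{0,1\}}c_{g'}\bmod 2$ if $c_g\in\{0,1\}$; $F(c)_g=c_g$ if $g$ is blocked in $c$; $F(c)_g=0$ otherwise. (It is a cellular automaton of radius 2.) $x$ is an equicontinuity point of $F$ if $\forall\epsilon>0\,\exists\delta>0\,\forall t\in\mathbb{N}$, $F^t(B(x,\delta))\subseteq B(F^t(x),\epsilon)$. *)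

From HB Require Import structures.
From Stdlib Require Import Reals ClassicalEpsilon.
From mathcomp Require Import all_boot.

Set Implicit Arguments.
Unset Strict Implicit.
Unset Printing Implicit Defensive.

Inductive gen := ga | gA | gb | gB.

Definition gen_eqb (x y : gen) : bool :=
  match x, y with
  | ga, ga | gA, gA | gb, gb | gB, gB => true
  | _, _ => false
  end.

Lemma gen_eqP : Equality.axiom gen_eqb.
Proof. by case; case; constructor. Qed.

HB.instance Definition _ := hasDecEq.Build gen gen_eqP.

Definition ginv (x : gen) : gen :=
  match x with ga => gA | gA => ga | gb => gB | gB => gb end.

(** A word is reduced if no two adjacent letters are mutually inverse.
    Words are stored right-to-left: the head of the list is the
    rightmost letter of the group element. *)
Fixpoint reducedb (w : seq gen) : bool :=
  match w with
  | x :: ((y :: _) as w') => (y != ginv x) && reducedb w'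
  | _ => true
  end.

Definition FG := {w : seq gen | reducedb w}.

Definition rmulw (w : seq gen) (e : gen) : seq gen :=
  match w with
  | x :: w' => if x == ginv e then w' else e :: w
  | [::] => [:: e]
  end.

Lemma rmulw_red (w : seq gen) (e : gen) : reducedb w -> reducedb (rmulw w e).
Proof.
case: w => [|x w'] //=.
case: ifP => [_ | hx].
  by case: w' => [|y w''] //= /andP[].
by move=> h; rewrite /= hx h.
Qed.

Definition gmul (g : FG) (e : gen) : FG :=
  exist _ (rmulw (val g) e) (rmulw_red e (valP g)).

Definition norm (g : FG) : nat := size (val g).

Definition gens : seq gen := [:: ga; gA; gb; gB].

Inductive Alph := A0 | A1 | Aiota | Abeta.

Definition conf := FG -> Alph.

Definition isbit (s : Alph) : bool := match s with A0 | A1 => true | _ => false end.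
Definition bitval (s : Alph) : nat := match s with A1 => 1 | _ => 0 end.
Definition is_iota (s : Alph) : bool := match s with Aiota => true | _ => false end.
Definition is_beta (s : Alph) : bool := match s with Abeta => true | _ => false end.

Definition nbrs (c : conf) (g : FG) : seq Alph := [seq c (gmul g e) | e <- gens].

Definition is_free (c : conf) (g : FG) : bool :=
  isbit (c g) && (2 <= count isbit (nbrs c g)).

Definition blocked (c : conf) (g : FG) : bool :=
  match c g with
  | Aiota => all (fun s => is_iota s || is_beta s) (nbrs c g)
  | Abeta =>
      (count is_iota (nbrs c g) == 1) &&
      all (fun e => is_iota (c (gmul g e)) || is_free c (gmul g e)) gens
  | _ => false
  end.

Definition CA (c : conf) : conf := fun g =>
  if isbit (c g) then
    (if odd (bitval (c g) + sumn [seq bitval s | s <- nbrs c g & isbit s])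
     then A1 else A0)
  else if blocked c g then c g else A0.

Open Scope R_scope.

Definition mindiff (x y : conf) : nat :=
  epsilon (inhabits 0%nat)
    (fun k => (exists g, norm g = k /\ x g <> y g) /\
              forall g, x g <> y g -> (k <= norm g)%N).

Definition dist (x y : conf) : R :=
  match excluded_middle_informative (exists g, x g <> y g) with
  | left _ => (/ 2) ^ (mindiff x y)
  | right _ => 0
  end.

Definition ball (x : conf) (delta : R) : conf -> Prop := fun y => dist x y <= delta.

Definition equicontinuity_point (f : conf -> conf) (x : conf) : Prop :=
  forall eps : R, 0 < eps -> exists delta : R, 0 < delta /\
    forall (t : nat) (y : conf), ball x delta y -> ball (iter t f x) eps (iter t f y).

Close Scope R_scope.

(* Bits are permanent, and F reads bit values only through the XOR sum, so
   flipping one bit does not change which cells are bits, iota or beta at any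
   later time, and the difference spreads at speed at most one in the Cayley
   tree.  By the XOR rule, a difference at a single neighbour of a bit changes
   that bit at the next step; hence a flip at the far end of an outward path
   of cells that are bits early enough travels back to its start.  Such paths
   exist because every bit has, one step later, at least two bit neighbours,
   one of which is further from the identity.  For the truncation of x to the
   ball of radius n (0 outside) some fixed cell h eventually becomes a bit: a
   bit of x, a beta of x (never blocked when there are no bits), or the
   identity when x is all iota, as the zeros outside the ball eat the iota
   region.  Flipping the end of a long path from h therefore produces two
   configurations arbitrarily close to x whose orbits differ at h. *)

From Pilot Require Import Defs.
From Stdlib Require Import Reals.
From mathcomp Require Import all_boot.
From Stdlib Require Import ClassicalEpsilon Classical Lra Wf_nat.
From mathcomp Require Import zify.

Set Implicit Arguments.
Unset Strict Implicit.
Unset Printing Implicit Defensive.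

Lemma ginvK : involutive ginv. Proof. by case. Qed.

Lemma mem_gens e : e \in gens. Proof. by case: e. Qed.

Lemma gmulK g e : gmul (gmul g e) (ginv e) = g.
Proof.
apply: val_inj; case: g => [[|x w] /= red_w]; first by rewrite ginvK eqxx.
case: ifP => [/eqP x_e | _] /=; last by rewrite ginvK eqxx.
case: w red_w => [|y w] /=; first by rewrite x_e.
by rewrite x_e ginvK => /andP[/negbTE -> _].
Qed.

Lemma gmulE g e : val (gmul g e) = e :: val g \/ val g = ginv e :: val (gmul g e).
Proof.
case: g => [[|x w] red_w] /=; first by left.
by case: ifP => [/eqP ->|_]; [right | left].
Qed.

Lemma norm_gmul_le g e : norm (gmul g e) <= (norm g).+1.
Proof. by rewrite /norm; case: (gmulE g e) => -> /=; lia. Qed.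

Definition child (g : FG) (e : gen) : bool := norm (gmul g e) == (norm g).+1.

Lemma gmul_child g e : child g e -> val (gmul g e) = e :: val g.
Proof. by rewrite /child /norm; case: (gmulE g e) => // ->; rewrite /= => /eqP; lia. Qed.

Lemma count_not_child g : count (predC (child g)) gens <= 1.
Proof.
case: g => [[|x w] red_w]; rewrite /child /norm /gmul /=; first by [].
have n_nSS : (size w == (size w).+2) = false by lia.
by case: x {red_w}; rewrite /= n_nSS eqxx.
Qed.

Lemma exists_child g (P : pred gen) : 1 < count P gens -> exists2 e, child g e & P e.
Proof.
move=> P2; have: 0 < count (predI (child g) P) gens.
  have := count_not_child g; have := count_predUI (predI (child g) P) (predC (child g)) gens.
  have : count P gens <= count (predU (predI (child g) P) (predC (child g))) gens.
    by apply: sub_count => e /= ->; rewrite andbT; case: (child g e).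
  lia.
by rewrite -has_count => /hasP[e _ /andP[]]; exists e.
Qed.

Lemma isbit_CA c g : isbit (c g) -> isbit (CA c g).
Proof. by rewrite /CA => ->; case: ifP. Qed.

Lemma isbit_iter c g s t : s <= t -> isbit (iter s CA c g) -> isbit (iter t CA c g).
Proof.
move=> /subnKC <-; elim: (t - s) => [|d IH]; first by rewrite addn0.
by rewrite addnS => /IH /isbit_CA.
Qed.

Lemma CA_nonbit c g : ~~ isbit (CA c g) -> CA c g = c g.
Proof. by rewrite /CA; case: ifP => _; [case: ifP | case: ifP]. Qed.

Lemma iter_nonbit c g t : ~~ isbit (iter t CA c g) -> iter t CA c g = c g.
Proof.
elim: t => [|t IH] //= not_bit; rewrite CA_nonbit // IH //.
by apply: contra not_bit; apply: isbit_CA.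
Qed.

Lemma all_nbrs c g (P : pred Alph) : all P (nbrs c g) -> forall e, P (c (gmul g e)).
Proof. by rewrite /nbrs all_map => /allP P_nbrs e; apply: P_nbrs (mem_gens e). Qed.

(* If [g] is a bit but not free, none of its neighbours is blocked: blocking
   would require [g] to be iota or free. *)
Lemma bit_spreads c g : isbit (c g) -> 1 < count (fun e => isbit (CA c (gmul g e))) gens.
Proof.
move=> g_bit; case g_free: (is_free c g).
  move: g_free; rewrite /is_free g_bit /nbrs count_map => /leq_trans; apply.
  by apply: sub_count => e /isbit_CA.
suff nbr_bit e : isbit (CA c (gmul g e)) by rewrite (eq_count nbr_bit) count_predT.
rewrite /CA; case: ifP => [_ | _]; first by case: ifP.
case: ifP => //; rewrite /blocked; case: (c (gmul g e)) => //.
- by move/all_nbrs/(_ (ginv e)); rewrite gmulK; case: (c g) g_bit.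
- case/andP=> _ /allP /(_ (ginv e) (mem_gens _)); rewrite gmulK g_free orbF.
  by case: (c g) g_bit.
Qed.

Definition skeleton (s : Alph) : Alph := if isbit s then A0 else s.

Definition same_skeleton (c1 c2 : conf) : Prop :=
  forall g, skeleton (c1 g) = skeleton (c2 g).

Section SameSkeleton.
Variables c1 c2 : conf.
Hypothesis c12 : same_skeleton c1 c2.

Lemma same_skeleton_isbit g : isbit (c1 g) = isbit (c2 g).
Proof. by move: (c12 g); rewrite /skeleton; case: (c1 g); case: (c2 g). Qed.

Lemma same_skeleton_iota g : is_iota (c1 g) = is_iota (c2 g).
Proof. by move: (c12 g); rewrite /skeleton; case: (c1 g); case: (c2 g). Qed.

Lemma same_skeleton_beta g : is_beta (c1 g) = is_beta (c2 g).
Proof. by move: (c12 g); rewrite /skeleton; case: (c1 g); case: (c2 g). Qed.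

Lemma same_skeleton_free g : is_free c1 g = is_free c2 g.
Proof.
rewrite /is_free /nbrs !count_map same_skeleton_isbit.
by congr (_ && (_ <= _)); apply: eq_count => e /=; rewrite same_skeleton_isbit.
Qed.

Lemma same_skeleton_blocked g : blocked c1 g = blocked c2 g.
Proof.
rewrite /blocked /nbrs !all_map !count_map.
under eq_all do rewrite /= same_skeleton_iota same_skeleton_beta.
under eq_count do rewrite /= same_skeleton_iota.
under [X in _ && X]eq_all do rewrite same_skeleton_iota same_skeleton_free.
by move: (c12 g); rewrite /skeleton; case: (c1 g); case: (c2 g).
Qed.

Lemma CA_same_skeleton : same_skeleton (CA c1) (CA c2).
Proof.
move=> g; have bit_CA := isbit_CA; rewrite /skeleton.
case bit1: (isbit (c1 g)); first by rewrite !bit_CA // -same_skeleton_isbit.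
move: (c12 g); rewrite /CA /skeleton -same_skeleton_isbit bit1 => <-.
by rewrite same_skeleton_blocked.
Qed.

End SameSkeleton.

Lemma iter_same_skeleton c1 c2 t :
  same_skeleton c1 c2 -> same_skeleton (iter t CA c1) (iter t CA c2).
Proof. by move=> c12; elim: t => //= t; apply: CA_same_skeleton. Qed.

Lemma CA_local c1 c2 g : same_skeleton c1 c2 -> c1 g = c2 g ->
  (forall e, c1 (gmul g e) = c2 (gmul g e)) -> CA c1 g = CA c2 g.
Proof.
move=> c12 eq_g eq_nbrs; have eq_N : nbrs c1 g = nbrs c2 g by apply: eq_map.
by rewrite /CA eq_N eq_g (same_skeleton_blocked c12).
Qed.

Definition parity (n : nat) : Alph := if odd n then Defs.A1 else A0.

Lemma CA_bit c g : isbit (c g) ->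
  CA c g = parity (bitval (c g) + \sum_(e <- gens) bitval (c (gmul g e))).
Proof.
rewrite /CA => ->; congr (parity (_ + _)).
rewrite sumnE /nbrs big_map big_filter big_map big_mkcond.
by apply: eq_bigr => e _; case: (c (gmul g e)).
Qed.

Lemma CA_flip_nbr c1 c2 g e0 : same_skeleton c1 c2 -> isbit (c1 g) -> c1 g = c2 g ->
  (forall e, e != e0 -> c1 (gmul g e) = c2 (gmul g e)) ->
  c1 (gmul g e0) <> c2 (gmul g e0) -> CA c1 g <> CA c2 g.
Proof.
move=> c12 g_bit eq_g eq_nbrs neq_e0.
have flip_e0 : odd (bitval (c1 (gmul g e0))) = ~~ odd (bitval (c2 (gmul g e0))).
  move: (c12 (gmul g e0)) neq_e0; rewrite /skeleton.
  by case: (c1 _); case: (c2 _).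
rewrite !CA_bit -?eq_g // !(bigD1_seq e0) ?mem_gens //=.
rewrite (eq_bigr _ (fun e ne_e0 => congr1 bitval (eq_nbrs e ne_e0))).
rewrite /parity !oddD flip_e0.
by case: (odd _); case: (odd _); case: (odd _).
Qed.

Fixpoint lcp (u v : seq gen) : nat :=
  match u, v with
  | x :: u', y :: v' => if x == y then (lcp u' v').+1 else 0
  | _, _ => 0
  end.

Lemma lcp_sizel u v : lcp u v <= size u.
Proof. by elim: u v => [|x u IH] [|y v] //=; case: ifP => // _; apply: IH. Qed.

Lemma lcp_sizer u v : lcp u v <= size v.
Proof. by elim: u v => [|x u IH] [|y v] //=; case: ifP => // _; apply: IH. Qed.

Lemma lcp_rcons u v x : lcp u v <= lcp (rcons u x) v <= (lcp u v).+1.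
Proof.
elim: u v => [|z u IH] [|y v] //=; first by case: ifP.
by case: ifP => // _; apply: IH.
Qed.

Lemma lcp_cat w u v : lcp (w ++ u) (w ++ v) = size w + lcp u v.
Proof. by elim: w => //= x w ->; rewrite eqxx. Qed.

Lemma lcp_refl u : lcp u u = size u.
Proof. by elim: u => //= x u ->; rewrite eqxx. Qed.

Lemma lcp_catr w v : lcp w (w ++ v) = size w.
Proof. by rewrite -{1}(cats0 w) lcp_cat addn0. Qed.

(* Words are stored right to left, so [lcp] of the reversed words is the
   length of the common prefix: [wdist] is the distance in the Cayley tree. *)
Definition wdist (g v : FG) : nat :=
  size (val g) + size (val v) - 2 * lcp (rev (val g)) (rev (val v)).

Lemma wdist_refl g : wdist g g = 0.
Proof. by rewrite /wdist lcp_refl size_rev; lia. Qed.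

Lemma wdist_gmul g e v : wdist g v <= (wdist (gmul g e) v).+1.
Proof.
rewrite /wdist; case: (gmulE g e) => ->; rewrite rev_cons.
  have := lcp_rcons (rev (val g)) (rev (val v)) e.
  have := lcp_sizel (rev (val g)) (rev (val v)).
  have := lcp_sizer (rcons (rev (val g)) e) (rev (val v)).
  have := lcp_sizer (rev (val g)) (rev (val v)).
  by rewrite !size_rev /=; lia.
set s := val (gmul g e).
have := lcp_rcons (rev s) (rev (val v)) (ginv e).
have := lcp_sizel (rev s) (rev (val v)).
have := lcp_sizel (rcons (rev s) (ginv e)) (rev (val v)).
by rewrite size_rcons !size_rev /=; lia.
Qed.

Lemma wdist_desc (g v : FG) (w : seq gen) : val v = w ++ val g -> wdist g v = size w.
Proof.
by rewrite /wdist => ->; rewrite rev_cat lcp_catr size_cat !size_rev; lia.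
Qed.

Lemma wdist_off_path (g v : FG) (w : seq gen) (e0 e : gen) :
  val v = w ++ e0 :: val g -> e != e0 -> wdist (gmul g e) v = (size w).+2.
Proof.
rewrite /wdist => -> e_e0; case: (gmulE g e) => ->.
  rewrite !rev_cat !rev_cons -!cats1 -!catA lcp_cat /= (negbTE e_e0).
  by rewrite size_cat /= size_rev; lia.
by rewrite -!cat_rcons rev_cat lcp_catr !size_cat !size_rcons size_rev; lia.
Qed.

Lemma light_cone c1 c2 q t : same_skeleton c1 c2 ->
  (forall g, c1 g <> c2 g -> g = q) ->
  forall g, iter t CA c1 g <> iter t CA c2 g -> wdist g q <= t.
Proof.
move=> c12 diff_q; elim: t => [|t IH] g /=.
  by move=> /diff_q ->; rewrite wdist_refl.
move=> neq_g; case: (classic (iter t CA c1 g = iter t CA c2 g)) => [eq_g | /IH]; last lia.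
case: (classic (forall e, iter t CA c1 (gmul g e) = iter t CA c2 (gmul g e))).
  by move=> eq_nbrs; case: neq_g; apply: CA_local => //; apply: iter_same_skeleton.
by case/not_all_ex_not=> e /IH; have := wdist_gmul g e q; lia.
Qed.

Definition flip (s : Alph) : Alph :=
  match s with A0 => Defs.A1 | Defs.A1 => A0 | s => s end.

Definition flipat (c : conf) (q : FG) : conf :=
  fun g => if g == q then flip (c g) else c g.

Lemma same_skeleton_flipat c q : isbit (c q) -> same_skeleton c (flipat c q).
Proof.
move=> q_bit g; rewrite /flipat; case: eqP => [-> | _] //.
by move: q_bit; rewrite /skeleton; case: (c q).
Qed.

Lemma flipat_diff c q g : c g <> flipat c q g -> g = q.
Proof. by rewrite /flipat; case: eqP. Qed.

Section Signal.
Variables (c : conf) (p : nat -> FG) (E : nat -> gen) (L : nat).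
Hypothesis p_step : forall i, p i.+1 = gmul (p i) (E i).
Hypothesis p_child : forall i, child (p i) (E i).
(* [p j] is a bit one step before the signal from [p L] reaches it. *)
Hypothesis p_bit : forall j, j < L -> isbit (iter (L - j.+1) CA c (p j)).
Hypothesis pL_bit : isbit (c (p L)).

Let c' := flipat c (p L).

Lemma p_suffix k j : j + k = L -> exists2 w, val (p L) = w ++ val (p j) & size w = k.
Proof.
elim: k j => [|k IH] j; first by rewrite addn0 => ->; exists [::].
rewrite addnS -addSn => /IH[w val_pL size_w]; exists (rcons w (E j)).
  by rewrite cat_rcons -gmul_child // -p_step.
by rewrite size_rcons size_w.
Qed.

Lemma signal t : t <= L -> iter t CA c (p (L - t)) <> iter t CA c' (p (L - t)).
Proof.
have c_c' := same_skeleton_flipat pL_bit.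
elim: t => [|t IH] lt_tL.
  by rewrite subn0 /= /c' /flipat eqxx; case: (c (p L)) pL_bit.
have cone := light_cone (t := t) c_c' (@flipat_diff c (p L)).
have j_def : L - t = (L - t.+1).+1 by lia.
move: IH; rewrite j_def; set j := L - t.+1 => IH.
have [w val_pL size_w] := p_suffix (j := j.+1) (k := t) ltac:(lia).
rewrite p_step gmul_child // in val_pL.
apply: (@CA_flip_nbr _ _ _ (E j)); first exact: iter_same_skeleton.
- by rewrite (_ : t = L - j.+1); [apply: p_bit | ]; lia.
- apply: NNPP => /cone; rewrite (wdist_desc (w := rcons w (E j))) ?cat_rcons //.
  by rewrite size_rcons; lia.
- move=> e e_Ej; apply: NNPP => /cone; rewrite (wdist_off_path val_pL e_Ej); lia.
- by rewrite -p_step; apply: IH; lia.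
Qed.

End Signal.

Definition bit_child (c : conf) (g : FG) : gen :=
  nth ga gens (find (fun e => child g e && isbit (c (gmul g e))) gens).

Lemma bit_child_spec c g : isbit (c g) ->
  child g (bit_child (CA c) g) && isbit (CA c (gmul g (bit_child (CA c) g))).
Proof.
move=> /bit_spreads /(exists_child g)[e child_e bit_e].
apply: (@nth_find _ ga (fun e => child g e && isbit (CA c (gmul g e)))).
by apply/hasP; exists e; rewrite ?mem_gens ?child_e.
Qed.

Section BitPath.
Variables (c : conf) (h : FG) (T0 : nat).
Hypothesis h_bit : isbit (iter T0 CA c h).

Fixpoint bit_path (i : nat) : FG :=
  if i is i'.+1 then gmul (bit_path i') (bit_child (iter (T0 + i').+1 CA c) (bit_path i'))
  else h.

Definition bit_step (i : nat) : gen := bit_child (iter (T0 + i).+1 CA c) (bit_path i).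

Lemma bit_path_bit i : isbit (iter (T0 + i) CA c (bit_path i)).
Proof.
elim: i => [|i IH]; first by rewrite addn0.
by rewrite addnS; case/andP: (bit_child_spec IH).
Qed.

Lemma child_bit_step i : child (bit_path i) (bit_step i).
Proof. by case/andP: (bit_child_spec (bit_path_bit i)). Qed.

Lemma norm_bit_path i : norm (bit_path i) = norm h + i.
Proof.
elim: i => [|i IH]; first by rewrite addn0.
by move/eqP: (child_bit_step i) => /= ->; rewrite IH addnS.
Qed.

End BitPath.

(* The path from [h] leaves the ball of radius [n] by time [T0 + n], so with
   [L = T0 + 2 n + 1] each of its cells is a bit before the signal from [p L]
   reaches it. *)
Lemma flip_far_bit c h T0 n : isbit (iter T0 CA c h) -> (forall g, n < norm g -> isbit (c g)) ->
  exists2 q, n < norm q & exists t, iter t CA c h <> iter t CA (flipat c q) h.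
Proof.
move=> h_bit far_bit; set p := bit_path c h T0; set L := T0 + 2 * n + 1.
have norm_p := norm_bit_path h_bit.
exists (p L); first by rewrite norm_p; lia.
exists L; suff: iter L CA c (p (L - L)) <> iter L CA (flipat c (p L)) (p (L - L)).
  by rewrite subnn.
apply: (signal (E := bit_step c h T0)) => //.
- exact: child_bit_step h_bit.
- move=> j lt_jL; case: (leqP (norm (p j)) n) => [near_j | far_j].
    apply: isbit_iter (bit_path_bit h_bit j); move: near_j; rewrite norm_p; lia.
  exact: isbit_iter (leq0n _) (far_bit _ far_j).
- by apply: far_bit; rewrite norm_p; lia.
Qed.

Definition truncate (x : conf) (n : nat) : conf :=
  fun g => if norm g <= n then x g else A0.

Lemma truncate_near x n g : norm g <= n -> truncate x n g = x g.
Proof. by rewrite /truncate => ->. Qed.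

Lemma truncate_far x n g : n < norm g -> isbit (truncate x n g).
Proof. by move=> far_g; rewrite /truncate leqNgt far_g. Qed.

Lemma iota_invaded x n : (forall g, x g = Aiota) ->
  forall j g, n < norm g + j -> isbit (iter j CA (truncate x n) g).
Proof.
move=> x_iota; elim=> [|j IH] g; first by rewrite addn0; apply: truncate_far.
case: (ltnP n (norm g + j)) => [/IH/isbit_CA // | near_g lt_n].
set c := iter j CA (truncate x n).
case g_bit: (isbit (c g)); first exact: isbit_CA.
have c_g : c g = Aiota.
  by rewrite /c iter_nonbit ?g_bit // truncate_near ?x_iota //; lia.
have [e /eqP child_e _] := @exists_child g predT isT.
have e_bit : isbit (c (gmul g e)) by apply: IH; rewrite child_e; lia.
rewrite /= -/c /CA g_bit; case: ifP => //; rewrite /blocked c_g.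
by move/all_nbrs/(_ e); case: (c (gmul g e)) e_bit.
Qed.

Lemma beta_unblocked c h : c h = Abeta -> (forall e, ~~ isbit (c (gmul h e))) ->
  isbit (CA c h).
Proof.
move=> c_h nbrs_nonbit; rewrite /CA c_h /=; case: ifP => //.
rewrite /blocked c_h => /andP[one_iota /allP all_iota_free].
have nbr_iota e : is_iota (c (gmul h e)).
  by move: (all_iota_free e (mem_gens e)); rewrite /is_free (negbTE (nbrs_nonbit e)) orbF.
by move: one_iota; rewrite /nbrs count_map /gens /= !nbr_iota.
Qed.

Lemma bit_source x : exists h, forall n, norm h < n ->
  exists T0, isbit (iter T0 CA (truncate x n) h).
Proof.
have [[h h_bit] | no_bit] := classic (exists h, isbit (x h)).
  by exists h => n lt_hn; exists 0; rewrite /= truncate_near //; lia.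
have nonbit g : ~~ isbit (x g) by apply/negP => g_bit; apply: no_bit; exists g.
have [[h x_h] | no_beta] := classic (exists h, x h = Abeta).
  exists h => n lt_hn; exists 1; apply: beta_unblocked.
    by rewrite truncate_near //; lia.
  by move=> e; rewrite truncate_near ?nonbit //; have := norm_gmul_le h e; lia.
have x_iota g : x g = Aiota.
  by case x_g: (x g) (nonbit g) => // _; case: no_beta; exists g.
by exists (exist _ [::] isT) => n lt_0n; exists n.+1; apply: iota_invaded => //; lia.
Qed.

Local Open Scope R_scope.

Lemma mindiff_spec (x y : conf) : (exists g, x g <> y g) ->
  (exists g, norm g = mindiff x y /\ x g <> y g) /\
  forall g, x g <> y g -> (mindiff x y <= norm g)%N.
Proof.
move=> [g0 neq_g0]; apply: (epsilon_spec (inhabits 0%N) (fun k =>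
  (exists g, norm g = k /\ x g <> y g) /\ forall g, x g <> y g -> (k <= norm g)%N)).
have [k [[min_k least_k] _]] := dec_inh_nat_subset_has_unique_least_element
  (fun k => exists g, norm g = k /\ x g <> y g) (fun k => classic _)
  (ex_intro _ _ (ex_intro _ g0 (conj erefl neq_g0))).
by exists k; split=> // g neq_g; apply/leP/least_k; exists g.
Qed.

Lemma half_pow_le k m : (k <= m)%N -> (/ 2) ^ m <= (/ 2) ^ k.
Proof.
move=> /leP km; rewrite !pow_inv; apply: Rinv_le_contravar.
  by apply: pow_lt; lra.
by apply: Rle_pow => //; lra.
Qed.

Lemma agree_ball x delta : 0 < delta -> exists N, forall n y, (N <= n)%N ->
  (forall g, (norm g <= n)%N -> x g = y g) -> Defs.ball x delta y.
Proof.
move=> delta_pos; have [N small] : exists N, forall n, (n >= N)%coq_nat -> Rabs ((/ 2) ^ n) < delta.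
  by apply: pow_lt_1_zero => //; rewrite Rabs_pos_eq; lra.
exists N => n y /leP le_Nn agree; rewrite /Defs.ball /Defs.dist.
case: excluded_middle_informative => [diff | _]; last lra.
have [[g [<- neq_g]] _] := mindiff_spec diff.
have lt_n_g : (n < norm g)%N by rewrite ltnNge; apply/negP => /agree.
apply: Rle_trans (half_pow_le lt_n_g) _; apply: Rlt_le.
by have := small n.+1 ltac:(lia); rewrite Rabs_pos_eq //; apply: pow_le; lra.
Qed.

Lemma ball_agree x y g : Defs.ball x ((/ 2) ^ (norm g).+1) y -> x g = y g.
Proof.
rewrite /Defs.ball /Defs.dist => le_dist; apply: NNPP => neq_g.
case: excluded_middle_informative le_dist => [diff | []]; last by exists g.
have [_ /(_ g neq_g) /half_pow_le le_g] := mindiff_spec diff.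
have := pow_lt (/ 2) (norm g) ltac:(lra); rewrite [_ ^ _.+1]/=; lra.
Qed.

Theorem lemma8 : forall x : conf, ~ equicontinuity_point CA x.
Proof.
move=> x equi; have [h source_h] := bit_source x.
have [delta [delta_pos equi_h]] := equi _ (pow_lt (/ 2) (norm h).+1 ltac:(lra)).
have [N close] := agree_ball x delta_pos.
pose n := maxn N (norm h).+1.
have [T0 bit_h] := source_h n ltac:(lia).
have [q far_q [t diff_t]] := flip_far_bit bit_h (@truncate_far x n).
have stable y : (forall g, (norm g <= n)%N -> x g = y g) -> iter t CA x h = iter t CA y h.
  by move=> agree; apply/ball_agree/equi_h/(close n) => //; lia.
apply: diff_t; rewrite -!stable // => g near_g; rewrite /flipat.
  case: eqP => [g_q | _]; last exact/esym/truncate_near.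
  by rewrite g_q in near_g; lia.
exact/esym/truncate_near.
Qed.
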